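(* Let $n\geq2$. There exists at least one homogeneous harmonic polynomial $h$ of degree three on $\mathbb{R}^{n+1}$ which is $(n+2)$-symmetric and satisfies $\int_{B_1}h(y)\,dy=0$.
   Context: Fix $n+2$ points $q_1,\dots,q_{n+2}\in\mathbb{S}^n\subset\mathbb{R}^{n+1}$ spread evenly on $\mathbb{S}^n$ (vertices of an inscribed regular simplex). $\mathcal{S}_{n+2}(q)$ is the set of rotations $\phi\in SO(n+1)$ mapping $\{q_1,\dots,q_{n+2}\}$ onto itself; $h$ is $(n+2)$-symmetric if $h\circ\phi=h$ for all $\phi\in\mathcal{S}_{n+2}(q)$. $B_1$ is the unit ball of $\mathbb{R}^{n+1}$. *)

From Stdlib Require Import Reals.
From Coquelicot Require Import Coquelicot.
From mathcomp Require Import all_boot all_algebra.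
From mathcomp Require Import Rstruct.
From mathcomp Require Import mpoly.

Set Implicit Arguments.
Unset Strict Implicit.
Unset Printing Implicit Defensive.

Import GRing.Theory.
Local Open Scope ring_scope.

Definition dotv (m : nat) (x y : 'rV[R]_m) : R := (x *m y^T) 0 0.

(* q_1,...,q_{n+2} are the vertices of a regular simplex inscribed in S^n:
   unit vectors with pairwise inner products -1/(n+1). *)
Definition regular_simplex (n : nat) (q : 'I_n.+2 -> 'rV[R]_n.+1) : Prop :=
  (forall i, dotv (q i) (q i) = 1) /\
  (forall i j, i != j -> dotv (q i) (q j) = - (n.+1%:R)^-1).

Definition is_rotation (m : nat) (M : 'M[R]_m) : Prop :=
  M *m M^T = 1%:M /\ \det M = 1.

Definition in_Sq (n : nat) (q : 'I_n.+2 -> 'rV[R]_n.+1) (M : 'M[R]_n.+1) : Prop :=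
  is_rotation M /\
  (forall i, exists j, q i *m M = q j) /\
  (forall j, exists i, q i *m M = q j).

Definition peval (m : nat) (p : {mpoly R[m]}) (x : 'rV[R]_m) : R :=
  p.@[fun i => x 0 i].

Definition symmetric_q (n : nat) (q : 'I_n.+2 -> 'rV[R]_n.+1)
  (p : {mpoly R[n.+1]}) : Prop :=
  forall M, in_Sq q M -> forall x : 'rV[R]_n.+1, peval p (x *m M) = peval p x.

Definition harmonic (m : nat) (p : {mpoly R[m]}) : Prop :=
  \sum_(i < m) mderiv i (mderiv i p) = 0.

(* Integral over the ball of radius r centred at 0 in R^k, of a function of a
   point given by its coordinates (nat -> R, only the first k used), by
   iterated Riemann integration (Fubini):
   int_{B^{k+1}_r} f = int_{-r}^{r} int_{B^k_{sqrt(r^2-t^2)}} f(t,y) dy dt. *)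
Fixpoint ball_integral (k : nat) (r : R) (f : (nat -> R) -> R) : R :=
  match k with
  | O => f (fun _ => 0%R)
  | S k' =>
      RInt (fun t =>
              ball_integral k' (sqrt (r * r - t * t)%R)
                (fun y => f (fun i => match i with O => t | S i' => y i' end)))
           (- r)%R r
  end.

Definition unit_ball_integral (m : nat) (p : {mpoly R[m]}) : R :=
  ball_integral m 1%R (fun y => peval p (\row_(i < m) y (nat_of_ord i))).

From Stdlib Require Import Reals Lra Classical FunctionalExtensionality PropExtensionality.
From Coquelicot Require Import Coquelicot.
From mathcomp Require Import all_boot all_order all_algebra.
From mathcomp Require Import Rstruct mpoly.
From mathcomp Require Import ring.

Set Implicit Arguments.
Unset Strict Implicit.
Unset Printing Implicit Defensive.

(* The witness is h(x) = sum_j <x, q_j>^3.  The Laplacian of <x, a>^3 is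
   6 |a|^2 <x, a>, and the unit vectors q_j of a regular simplex sum to zero,
   so h is harmonic.  A rotation permuting the q_j permutes the summands of h.
   Being odd, h integrates to zero over the centrally symmetric ball, and
   h(q_1) = 1 - (n+1)^-2 is nonzero. *)

Section OddIntegral.
Local Open Scope R_scope.

(* The iterated integral is taken even where an inner integral does not
   exist; there RInt returns the junk value 0 (the least upper bound of all
   of R is +oo, whose real part is 0). *)
Lemma RInt_not_ex (f : R -> R) a b : ~ ex_RInt f a b -> RInt f a b = 0.
Proof.
move=> nex; change (R_complete_lim
  (fun A : R -> Prop => forall x, is_RInt f a b x -> A x) = 0).
have -> : (fun A : R -> Prop => forall x, is_RInt f a b x -> A x) = (fun _ => True).
  apply: functional_extensionality => A; apply: propositional_extensionality.
  by split=> // _ x fx; case: nex; exists x.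
rewrite /R_complete_lim.
suff -> : Lub_Rbar (fun _ : R => True) = p_infty by [].
apply: is_lub_Rbar_unique; split=> // -[x| |] ub //=.
- by have /= := ub (x + 1) I; lra.
- exact: ub 0 I.
Qed.

Lemma is_RInt_comp_opp_sym (g : R -> R) r l :
  is_RInt g (- r) r l -> is_RInt (fun y => g (- y)) (- r) r l.
Proof.
move=> gl; have : is_RInt g (- r) (- - r) l by rewrite Ropp_involutive.
move=> /is_RInt_comp_opp/is_RInt_swap/is_RInt_opp; rewrite opp_opp.
by apply: is_RInt_ext => y _; rewrite opp_opp.
Qed.

Lemma RInt_comp_opp_sym (g : R -> R) r :
  RInt (fun y => g (- y)) (- r) r = RInt g (- r) r.
Proof.
rewrite /RInt; f_equal; apply: functional_extensionality => l.
apply: propositional_extensionality; split; last exact: is_RInt_comp_opp_sym.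
move=> /is_RInt_comp_opp_sym; apply: is_RInt_ext => y _.
by rewrite Ropp_involutive.
Qed.

Lemma RInt_opp_total (g : R -> R) a b :
  RInt (fun y => - g y) a b = - RInt g a b.
Proof.
have [gint|nex] := classic (ex_RInt g a b); first exact: RInt_opp.
rewrite (RInt_not_ex nex) RInt_not_ex ?Ropp_0 // => /ex_RInt_opp gint.
by apply/nex/(ex_RInt_ext _ _ _ _ _ gint) => y _; apply: opp_opp.
Qed.

Lemma ball_integral_comp_opp k r f :
  ball_integral k r (fun y => f (fun i => - y i)) = ball_integral k r f.
Proof.
elim: k r f => [|k IHk] r f /=.
  by congr f; apply: functional_extensionality => _; rewrite Ropp_0.
rewrite -RInt_comp_opp_sym; apply: RInt_ext => t _.
rewrite GRing.mulrNN -IHk; congr ball_integral; apply: functional_extensionality => y.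
by congr f; apply: functional_extensionality => -[|i]; rewrite ?Ropp_involutive.
Qed.

Lemma ball_integral_opp k r f :
  ball_integral k r (fun y => - f y) = - ball_integral k r f.
Proof.
elim: k r f => [|k IHk] r f //=.
by rewrite -RInt_opp_total; apply: RInt_ext => t _; rewrite IHk.
Qed.

Lemma ball_integral_odd k r f :
  (forall y, f (fun i => - y i) = - f y) -> ball_integral k r f = 0.
Proof.
move=> f_odd.
have : ball_integral k r f = - ball_integral k r f.
  rewrite -ball_integral_opp -ball_integral_comp_opp.
  by congr ball_integral; apply: functional_extensionality.
lra.
Qed.

End OddIntegral.

Import GRing.Theory Num.Theory Order.TTheory.
Local Open Scope ring_scope.

Section InnerProduct.
Variable m : nat.
Implicit Types (x y : 'rV[R]_m) (M : 'M[R]_m).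

Lemma dotvE x y : dotv x y = \sum_k x 0 k * y 0 k.
Proof. by rewrite /dotv mxE; apply: eq_bigr => k _; rewrite mxE. Qed.

Lemma dotvNl x y : dotv (- x) y = - dotv x y.
Proof. by rewrite /dotv mulNmx mxE. Qed.

Lemma dotv_suml (I : Type) (r : seq I) (P : pred I) (F : I -> 'rV[R]_m) y :
  dotv (\sum_(i <- r | P i) F i) y = \sum_(i <- r | P i) dotv (F i) y.
Proof. by rewrite /dotv mulmx_suml summxE. Qed.

Lemma dotv_sumr (I : Type) (r : seq I) (P : pred I) (F : I -> 'rV[R]_m) x :
  dotv x (\sum_(i <- r | P i) F i) = \sum_(i <- r | P i) dotv x (F i).
Proof. by rewrite /dotv linear_sum mulmx_sumr summxE. Qed.

Lemma dotvv_eq0 x : dotv x x = 0 -> x = 0.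
Proof.
rewrite dotvE => /eqP; rewrite psumr_eq0 => [/allP x0|k _]; last first.
  by rewrite -expr2 sqr_ge0.
apply/rowP => k; rewrite mxE; apply/eqP.
by have := x0 k (mem_index_enum k); rewrite mulf_eq0 orbb.
Qed.

Lemma dotv_mulmx_orthogonal M x y :
  M *m M^T = 1%:M -> dotv (x *m M) (y *m M) = dotv x y.
Proof. by move=> MMt; rewrite /dotv trmx_mul mulmxA -(mulmxA x) MMt mulmx1. Qed.

End InnerProduct.

Section RegularSimplex.
Variables (n : nat) (q : 'I_n.+2 -> 'rV[R]_n.+1).
Hypothesis simplex_q : regular_simplex q.

Lemma regular_simplex_inj : injective q.
Proof.
have [q1 qij] := simplex_q; move=> i j qi_qj; apply/eqP/negPn/negP => ij.
have := qij i j ij; rewrite qi_qj q1 => /eqP; apply/negP.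
by rewrite -subr_eq0 opprK lt0r_neq0 // ltr_wpDr // invr_ge0 ler0n.
Qed.

Lemma regular_simplex_sum_dotv i : \sum_j dotv (q i) (q j) = 0.
Proof.
have [q1 qij] := simplex_q.
rewrite (bigD1 i) //= q1 (eq_bigr (fun _ => - n.+1%:R^-1)); last first.
  by move=> j ji; rewrite qij // eq_sym.
rewrite sumr_const cardC1 card_ord /= -[_ *+ n.+1]mulr_natr mulNr mulVf ?subrr //.
by rewrite pnatr_eq0.
Qed.

Lemma regular_simplex_sum : \sum_j q j = 0.
Proof.
apply: dotvv_eq0; rewrite dotv_suml big1 // => i _.
by rewrite dotv_sumr regular_simplex_sum_dotv.
Qed.

End RegularSimplex.

Section CubeForms.
Variable m : nat.
Implicit Types (a x : 'rV[R]_m) (p : {mpoly R[m]}).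

Definition linform a : {mpoly R[m]} := \sum_k a 0 k *: 'X_k.

Lemma peval_linform a x : peval (linform a) x = dotv x a.
Proof.
rewrite /peval /linform dotvE rmorph_sum /=; apply: eq_bigr => k _.
by rewrite mevalZ mevalXU mulrC.
Qed.

Lemma linform_homog a : linform a \is 1.-homog.
Proof.
by apply: rpred_sum => k _; apply: rpredZ; rewrite dhomogX; apply/eqP/mdeg1.
Qed.

Lemma linform_sum (I : Type) (r : seq I) (P : pred I) (F : I -> 'rV[R]_m) :
  linform (\sum_(i <- r | P i) F i) = \sum_(i <- r | P i) linform (F i).
Proof.
rewrite /linform exchange_big; apply: eq_bigr => k _.
by rewrite summxE scaler_suml.
Qed.

Lemma mderiv_linform i a : mderiv i (linform a) = (a 0 i)%:MP.
Proof.
rewrite /linform raddf_sum (bigD1 i) //= big1 ?addr0 => [|k /negPf ki].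
  rewrite mderivZ mderivX mnm1E eqxx -[X in (X - _)%MM]add0m addmK mpolyX0.
  by rewrite scale1r -alg_mpolyC.
by rewrite mderivZ mderivX mnm1E ki scale0r scaler0.
Qed.

Lemma mderiv_sum i (I : Type) (r : seq I) (P : pred I) (F : I -> {mpoly R[m]}) :
  mderiv i (\sum_(j <- r | P j) F j) = \sum_(j <- r | P j) mderiv i (F j).
Proof. by apply: big_morph; [exact: mderivD | exact: mderiv0]. Qed.

Lemma mderiv2_cube i p c :
  mderiv i p = c%:MP -> mderiv i (mderiv i (p ^+ 3)) = (6 * c ^+ 2) *: p.
Proof.
move=> dp; rewrite !exprS expr0 mulr1 !(mderivM, mderivD, dp, mderivC).
by rewrite -mul_mpolyC !mpolyCM mpolyC_nat; ring.
Qed.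

Lemma laplacian_linform_cube a :
  \sum_i mderiv i (mderiv i (linform a ^+ 3)) = (6 * dotv a a) *: linform a.
Proof.
rewrite dotvE mulr_sumr scaler_suml; apply: eq_bigr => i _.
by rewrite (mderiv2_cube (mderiv_linform i a)) expr2.
Qed.

Variable N : nat.
Implicit Type q : 'I_N -> 'rV[R]_m.

Definition sum_cube_forms q : {mpoly R[m]} := \sum_j linform (q j) ^+ 3.

Lemma peval_sum_cube_forms q x :
  peval (sum_cube_forms q) x = \sum_j dotv x (q j) ^+ 3.
Proof.
rewrite /peval /sum_cube_forms rmorph_sum /=; apply: eq_bigr => j _.
by rewrite rmorphXn -peval_linform.
Qed.

Lemma sum_cube_forms_homog q : sum_cube_forms q \is 3.-homog.
Proof. by apply: rpred_sum => j _; apply: (dhomogMn 3 (linform_homog _)). Qed.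

Lemma sum_cube_forms_harmonic q :
  (forall j, dotv (q j) (q j) = 1) -> \sum_j q j = 0 ->
  harmonic (sum_cube_forms q).
Proof.
move=> q1 q_sum0; rewrite /harmonic /sum_cube_forms.
(* mderiv unfolds to a sum itself, so the inner derivative must be named. *)
under eq_bigr => i _ do
  rewrite (@mderiv_sum i _ _ _ (fun j => linform (q j) ^+ 3)) mderiv_sum.
rewrite exchange_big.
under eq_bigr => j _ do rewrite laplacian_linform_cube q1 mulr1.
by rewrite -scaler_sumr -linform_sum q_sum0 /linform big1 ?scaler0 // => k _;
  rewrite mxE scale0r.
Qed.

Lemma peval_sum_cube_formsN q x :
  peval (sum_cube_forms q) (- x) = - peval (sum_cube_forms q) x.
Proof.
rewrite !peval_sum_cube_forms -sumrN; apply: eq_bigr => j _.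
by rewrite dotvNl; ring.
Qed.

Lemma peval_sum_cube_forms_orthogonal q M x :
  injective q -> M *m M^T = 1%:M -> (forall i, exists j, q i *m M = q j) ->
  peval (sum_cube_forms q) (x *m M) = peval (sum_cube_forms q) x.
Proof.
move=> q_inj MMt qM; rewrite !peval_sum_cube_forms.
pose s i := odflt i [pick j | q i *m M == q j].
have qMs i : q i *m M = q (s i).
  rewrite /s; case: pickP => [j /eqP //|none].
  by have [j qiM] := qM i; move: (none j); rewrite qiM eqxx.
have s_inj : injective s.
  move=> i j sij; apply: q_inj.
  by rewrite -[q i]mulmx1 -[q j]mulmx1 -MMt !mulmxA qMs sij -qMs.
rewrite (reindex_inj s_inj); apply: eq_bigr => i _.
by rewrite -qMs dotv_mulmx_orthogonal.
Qed.

End CubeForms.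

Lemma sum_cube_forms_symmetric n (q : 'I_n.+2 -> 'rV[R]_n.+1) :
  regular_simplex q -> symmetric_q q (sum_cube_forms q).
Proof.
move=> simplex_q M [[MMt _] [qM _]] x.
exact: peval_sum_cube_forms_orthogonal (regular_simplex_inj simplex_q) MMt qM.
Qed.

Lemma sum_cube_forms_neq0 n (q : 'I_n.+2 -> 'rV[R]_n.+1) :
  (0 < n)%N -> regular_simplex q -> sum_cube_forms q != 0.
Proof.
move=> n_gt0 [q1 qij]; apply/eqP => /(congr1 (fun p => peval p (q ord0))).
rewrite peval_sum_cube_forms /peval meval0 big_ord_recl q1 expr1n.
rewrite (eq_bigr (fun _ => (- n.+1%:R^-1) ^+ 3)) => [|j _]; last first.
  by rewrite qij // eq_sym neq_lift.
rewrite sumr_const card_ord -[_ *+ n.+1]mulr_natr.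
have -> : 1 + (- n.+1%:R^-1) ^+ 3 * n.+1%:R = 1 - n.+1%:R^-1 ^+ 2 :> R.
  by field; rewrite nat1r pnatr_eq0.
move/eqP; rewrite subr_eq0 eq_sym lt_eqF // expr_lt1 // ?invr_ge0 ?ler0n //.
by rewrite invf_lt1 ?ltr0n // ltr1n ltnS.
Qed.

Theorem lemma8p1 (n : nat) (q : 'I_n.+2 -> 'rV[R]_n.+1) :
  (2 <= n)%N ->
  regular_simplex q ->
  exists h : {mpoly R[n.+1]},
    [/\ h != 0, h \is 3.-homog, harmonic h, symmetric_q q h
      & unit_ball_integral h = 0].
Proof.
move=> n_ge2 simplex_q; exists (sum_cube_forms q); split.
- exact: sum_cube_forms_neq0 (leq_trans _ n_ge2) simplex_q.
- exact: sum_cube_forms_homog.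
- apply: sum_cube_forms_harmonic; first by case: simplex_q.
  exact: regular_simplex_sum.
- exact: sum_cube_forms_symmetric.
- apply: ball_integral_odd => y.
  have -> : \row_(i < n.+1) - y i = - \row_(i < n.+1) y i.
    by apply/rowP => i; rewrite !mxE.
  exact: peval_sum_cube_formsN.
Qed.
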